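(* Let $-\omega$ be the automorphism of $\mathcal A_\theta^{alg}$ with $U_1\mapsto U_2$, $U_2\mapsto\lambda^{-1/2}U_1^{-1}U_2$, and let $H^0(\mathcal A_\theta^{alg},{}_{-\omega}\mathcal A_\theta^{alg\ast})$ be the space of formal series $\varphi=\sum\varphi_{n,m}U_1^nU_2^m$ with $((-\omega)\cdot a)\varphi=\varphi a$ for all $a\in\mathcal A_\theta^{alg}$. Then every such $\varphi$ is determined by the coefficient $\varphi_{0,0}$, and $\varphi_{n,m}=\lambda^{-\frac{m^2+n^2}{2}}\varphi_{0,0}$ for all $(n,m)\in\mathbb Z^2$.
   Context: Let $\theta\in\mathbb R\setminus\mathbb Q$, $\lambda=e^{2\pi i\theta}$, $\lambda^s:=e^{2\pi i\theta s}$ for $s\in\mathbb R$. $\mathcal A_\theta^{alg}$ is the complex algebra of finite sums $\sum a_{n,m}U_1^nU_2^m$ with $U_1,U_2$ invertible and $U_2U_1=\lambda U_1U_2$; formal series $\sum_{(n,m)\in\mathbb Z^2}\varphi_{n,m}U_1^nU_2^m$ with arbitrary coefficients form an $\mathcal A_\theta^{alg}$-bimodule via left/right multiplication. The automorphism $-\omega$ is the action of $\begin{pmatrix}0&-1\\1&1\end{pmatrix}\in SL(2,\mathbb Z)$, of order $6$. *)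

From mathcomp Require Import all_boot all_order all_algebra.
From mathcomp Require Import all_classical all_reals all_analysis.
From mathcomp Require Import complex.
Import GRing.Theory Num.Theory.
Set Implicit Arguments. Unset Strict Implicit. Unset Printing Implicit Defensive.
Local Open Scope ring_scope.
Local Open Scope complex_scope.

Section NCTorus.
Variable R : realType.
Variable theta : R.

(* lambda^s := exp(2 pi i theta s), for real s *)
Definition lam (s : R) : R[i] :=
  cos (2 * pi * theta * s) +i* sin (2 * pi * theta * s).

Definition lamz (k : int) : R[i] := lam (k%:~R).

(* A monomial c U1^n U2^m is ((n, m), c). *)
Definition mono := ((int * int) * R[i])%type.

(* An element of A_theta^alg is represented by a finite list of monomials,
   standing for their (finite) sum. *)
Definition alg := seq mono.

(* Formal series sum phi n m U1^n U2^m, arbitrary coefficients. *)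
Definition fseries := int -> int -> R[i].

(* Product of monomials, using U2^m U1^p = lambda^(m p) U1^p U2^m
   (a consequence of U2 U1 = lambda U1 U2). *)
Definition mono_mul (x y : mono) : mono :=
  ((x.1.1 + y.1.1, x.1.2 + y.1.2)%R, x.2 * y.2 * lamz (x.1.2 * y.1.1)).

Definition alg_mul (a b : alg) : alg := [seq mono_mul x y | x <- a, y <- b].

Definition alg_one : alg := [:: ((0, 0)%R, 1)].

Definition alg_scale (c : R[i]) (a : alg) : alg := [seq (x.1, c * x.2) | x <- a].

Definition alg_pow (x : alg) (n : nat) : alg := iter n (alg_mul x) alg_one.

Definition alg_zpow (x xinv : alg) (k : int) : alg :=
  match k with
  | Posz n => alg_pow x n
  | Negz n => alg_pow xinv n.+1
  end.

Definition U1 : alg := [:: ((1, 0)%R, 1)].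
Definition U1inv : alg := [:: ((-1, 0)%R, 1)].
Definition U2 : alg := [:: ((0, 1)%R, 1)].
Definition U2inv : alg := [:: ((0, -1)%R, 1)].

(* -omega : U1 |-> U2, U2 |-> lambda^(-1/2) U1^-1 U2 *)
Definition mw1 : alg := U2.
Definition mw1inv : alg := U2inv.
Definition mw2 : alg := alg_mul (alg_scale (lam (- (1 / 2))) U1inv) U2.
Definition mw2inv : alg := alg_mul (alg_scale (lam (1 / 2)) U2inv) U1.

Definition minus_omega (a : alg) : alg :=
  flatten [seq alg_scale x.2 (alg_mul (alg_zpow mw1 mw1inv x.1.1)
                                      (alg_zpow mw2 mw2inv x.1.2)) | x <- a].

(* left action a . phi : (c U1^n U2^m)(phi_{p,q} U1^p U2^q)
   = c phi_{p,q} lambda^(m p) U1^(n+p) U2^(m+q) *)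
Definition lact (a : alg) (phi : fseries) : fseries := fun k l =>
  \sum_(x <- a) x.2 * lamz (x.1.2 * (k - x.1.1)) * phi (k - x.1.1) (l - x.1.2).

(* right action phi . a : (phi_{p,q} U1^p U2^q)(c U1^n U2^m)
   = phi_{p,q} c lambda^(q n) U1^(p+n) U2^(q+m) *)
Definition ract (phi : fseries) (a : alg) : fseries := fun k l =>
  \sum_(x <- a) phi (k - x.1.1) (l - x.1.2) * x.2 * lamz ((l - x.1.2) * x.1.1).

Definition in_H0 (phi : fseries) : Prop :=
  forall a : alg, lact (minus_omega a) phi = ract phi a.

End NCTorus.

(** The invariance relation for [a = U2] shifts the first index of [phi] by
    one at the cost of the factor [lambda^(-k-1/2)], and combined with the
    relation for [a = U1] the same holds for the second index along the axis
    [n = 0].  Both recurrences are solved by the Gaussian [lambda^(-k^2/2)]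
    since [(k+1)^2/2 - k^2/2 = k + 1/2], and a first-order recurrence with
    nonzero coefficients on [int] is determined by its value at [0]. *)
From mathcomp Require Import all_boot all_order all_algebra.
From mathcomp Require Import all_classical all_reals all_analysis.
From mathcomp Require Import complex ring lra.
Import GRing.Theory Num.Theory.
Set Implicit Arguments. Unset Strict Implicit. Unset Printing Implicit Defensive.
Local Open Scope ring_scope.
Local Open Scope complex_scope.

Lemma eq_int_recurrence (K : idomainType) (c f g : int -> K) :
  (forall k, c k != 0) ->
  (forall k, f (k + 1) = c k * f k) -> (forall k, g (k + 1) = c k * g k) ->
  f 0 = g 0 -> f =1 g.
Proof.
move=> c_neq0 fS gS fg0.
have eq_pos (n : nat) : f n = g n.
  by elim: n => [//|n IHn]; rewrite -addn1 PoszD fS gS IHn.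
have eq_neg (n : nat) : f (- n%:Z) = g (- n%:Z).
  elim: n => [|n IHn]; first by rewrite oppr0.
  apply: (mulfI (c_neq0 (- n.+1%:Z))); rewrite -fS -gS.
  by rewrite -addn1 PoszD opprD addrK.
by case=> n; [exact: eq_pos | rewrite NegzE; exact: eq_neg].
Qed.

Section Lambda.
Variables (R : realType) (theta : R).

Lemma lamD (s t : R) : lam theta (s + t) = lam theta s * lam theta t.
Proof.
rewrite /lam mulrDr cosD sinD.
by rewrite [RHS]/GRing.mul /= (addrC (_ * sin _)) (mulrC (sin _)).
Qed.

Lemma lam0 : lam theta 0 = 1.
Proof. by rewrite /lam mulr0 cos0 sin0. Qed.

Lemma lam_neq0 (s : R) : lam theta s != 0.
Proof.
apply/eqP => lam_s0; have := lamD s (- s).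
by rewrite subrr lam0 lam_s0 mul0r; apply/eqP; rewrite oner_eq0.
Qed.

Lemma lamz0 : lamz theta 0 = 1.
Proof. exact: lam0. Qed.

Definition gauss (k : int) : R[i] := lam theta (- (k ^+ 2)%:~R / 2).

Definition gauss_ratio (k : int) : R[i] := lam theta (- k%:~R - 1 / 2).

Lemma gaussS (k : int) : gauss (k + 1) = gauss_ratio k * gauss k.
Proof. by rewrite /gauss /gauss_ratio -lamD !rmorphXn /= intrD; congr lam; field. Qed.

Lemma gauss0 : gauss 0 = 1.
Proof. by rewrite /gauss expr0n /= oppr0 mul0r lam0. Qed.

Lemma gauss_recurrence (f : int -> R[i]) :
  (forall k, f (k + 1) = gauss_ratio k * f k) -> forall k, f k = gauss k * f 0.
Proof.
move=> fS; apply: (@eq_int_recurrence _ gauss_ratio f (fun k => gauss k * f 0) _ fS) => //.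
- by move=> k; exact: lam_neq0.
- by move=> k; rewrite gaussS mulrA.
- by rewrite gauss0 mul1r.
Qed.

End Lambda.

Section Invariants.
Variables (R : realType) (theta : R) (phi : fseries R).
Hypothesis phi_H0 : in_H0 theta phi.

Lemma in_H0_U1 (k l : int) :
  lamz theta k * phi k (l - 1) = phi (k - 1) l * lamz theta l.
Proof.
have := congr1 (fun f => f k l) (phi_H0 (U1 R)).
rewrite /lact /ract /minus_omega /mw1 /= /alg_pow /= /alg_mul /= /mono_mul /=.
by rewrite !big_cons !big_nil /= !(mul0r, mulr0, addr0, add0r, lamz0, mul1r, mulr1, subr0).
Qed.

Lemma in_H0_U2 (k l : int) :
  lam theta (- (1 / 2)) * lamz theta (k + 1) * phi (k + 1) (l - 1) = phi k (l - 1).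
Proof.
have := congr1 (fun f => f k l) (phi_H0 (U2 R)).
rewrite /lact /ract /minus_omega /mw2 /= /alg_pow /= /alg_mul /= /mono_mul /=.
rewrite !big_cons !big_nil /=.
by rewrite !(mul0r, mulr0, addr0, add0r, lamz0, mul1r, mulr1, subr0, opprK).
Qed.

Lemma in_H0_shift1 (k l : int) :
  phi (k + 1) l = gauss_ratio theta k * phi k l.
Proof.
have := in_H0_U2 k (l + 1); rewrite addrK => <-.
rewrite !mulrA /lamz -!lamD -[LHS]mul1r.
by congr (_ * _); rewrite -(lam0 theta); congr lam; rewrite intrD; lra.
Qed.

(* [in_H0_U1] links the axis [n = 0] to the column [n = 1], which
   [in_H0_shift1] brings back to [n = 0]. *)
Lemma in_H0_shift2 (l : int) :
  phi 0 (l + 1) = gauss_ratio theta l * phi 0 l.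
Proof.
have := in_H0_U1 1 (l + 1); rewrite addrK subrr.
have := in_H0_shift1 0 l; rewrite add0r => -> /(congr1 (fun x => x * lamz theta (- (l + 1)))).
rewrite -[RHS]mulrA /lamz -[lam _ _ * lam _ (_ (- _))]lamD rmorphN /= subrr lam0 mulr1 => <-.
rewrite mulrA mulrC mulrA -!lamD /gauss_ratio; congr (_ * _); congr lam.
rewrite intrD /=; lra.
Qed.

End Invariants.

Theorem mainTheorem8 (R : realType) (theta : R)
  (htheta : forall q : rat, theta != ratr q)
  (phi : fseries R) (hphi : in_H0 theta phi) :
  forall n m : int,
    phi n m = lam theta (- ((m ^+ 2 + n ^+ 2)%:~R) / 2) * phi 0 0.
Proof.
move=> n m.
have column := @gauss_recurrence _ theta (phi^~ m) (fun k => in_H0_shift1 hphi k m) n.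
have axis := @gauss_recurrence _ theta (phi 0) (in_H0_shift2 hphi) m.
rewrite column axis mulrA /gauss -lamD; congr (_ * _); congr lam.
by rewrite intrD /=; field.
Qed.
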